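(* Let $0<\mu<1$, $0<\nu<1$, $C>0$, $N_0\in\mathbb Z$, and for $n\ge N_0$ let $F_n,G_n\in\mathbb R^{1\times4}$ and $H_n\in\mathbb R^{2\times4}$ satisfy $\|F_n\|,\|G_n\|,\|H_n\|\le C\nu^n$. Consider the system $$\xi_{n+1}=\mu\xi_n+F_n\zeta_n,\quad \eta_{n+1}=\mu^{-1}\eta_n+G_n\zeta_n,\quad \chi_{n+1}=\chi_n+H_n\zeta_n,$$ where $\xi_n,\eta_n\in\mathbb R$, $\chi_n\in\mathbb R^2$, $\zeta_n=(\xi_n,\eta_n,\chi_n)^T\in\mathbb R^4$. Then there is an integer $N\ge N_0$ such that for every $\xi^0\in\mathbb R$ and $\chi_+\in\mathbb R^2$ there exists a unique solution $\{\zeta_n\}_{n\ge N}$ of the system with $\xi_N=\xi^0$, $\chi_n\to\chi_+$, $\xi_n\to0$ and $\eta_n\to0$ as $n\to+\infty$. *)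

From Stdlib Require Import Reals ZArith.
Open Scope R_scope.

(* A vector of R^4 is represented by a function nat -> R, only the
   components 0,1,2,3 being relevant.  A state zeta_n = (xi_n, eta_n, chi_n)
   has xi_n = zeta_n 0, eta_n = zeta_n 1, chi_n = (zeta_n 2, zeta_n 3). *)
Definition vec4 := nat -> R.

Definition dot4 (a z : vec4) : R := a 0%nat * z 0%nat + a 1%nat * z 1%nat
  + a 2%nat * z 2%nat + a 3%nat * z 3%nat.

Definition norm14 (a : vec4) : R := sqrt (dot4 a a).

Definition norm24 (h : nat -> vec4) : R :=
  sqrt (dot4 (h 0%nat) (h 0%nat) + dot4 (h 1%nat) (h 1%nat)).

Definition is_solution (mu : R) (F G : Z -> vec4) (H : Z -> nat -> vec4)
  (N : Z) (zeta : Z -> vec4) : Prop :=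
  forall n : Z, (N <= n)%Z ->
    zeta (n + 1)%Z 0%nat = mu * zeta n 0%nat + dot4 (F n) (zeta n) /\
    zeta (n + 1)%Z 1%nat = / mu * zeta n 1%nat + dot4 (G n) (zeta n) /\
    zeta (n + 1)%Z 2%nat = zeta n 2%nat + dot4 (H n 0%nat) (zeta n) /\
    zeta (n + 1)%Z 3%nat = zeta n 3%nat + dot4 (H n 1%nat) (zeta n).

Definition Zcv (u : Z -> R) (l : R) : Prop :=
  forall eps : R, eps > 0 -> exists M : Z, forall n : Z, (M <= n)%Z ->
    Rabs (u n - l) < eps.

From Stdlib Require Import Reals Lra Psatz Lia ZArith.
From Coquelicot Require Import Coquelicot.
Open Scope R_scope.

(* Lyapunov-Perron argument.  After shifting time to start at N, a solution with the
   prescribed data (xi0, chi_+) that decays in xi and eta is the same as a bounded fixed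
   point of zeta = b + K zeta, where b_m = (mu^m xi0, 0, chi_+) and K sums the coupling
   terms forward from N in the stable coordinate and backward from +infinity in the
   unstable (with weights mu^(k+1)) and neutral ones.  If every coupling row satisfies
   |a_j . w| <= gam nu^j sup|w|, then K contracts the sup norm by
   q = gam (1/(1-mu) + 1/(1-nu)), and gam = 2 C nu^N makes q < 1 for N large.  Picard
   iteration yields the solution; the same estimates, applied to the difference of two
   solutions (which has zero data), show that this difference is contracted by q, hence
   vanishes. *)

Lemma dot4_self_nonneg (a : vec4) : 0 <= dot4 a a.
Proof. unfold dot4. nra. Qed.

Lemma sum_abs4_le (a : vec4) :
  Rabs (a 0%nat) + Rabs (a 1%nat) + Rabs (a 2%nat) + Rabs (a 3%nat) <= 2 * norm14 a.
Proof.
  assert (Sq : forall x, Rabs x * Rabs x = x * x) by (intro x; rewrite <- Rabs_mult; apply Rabs_right; nra).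
  pose proof (Sq (a 0%nat)); pose proof (Sq (a 1%nat)); pose proof (Sq (a 2%nat)); pose proof (Sq (a 3%nat)).
  unfold norm14. apply Rsqr_incr_0_var; [|pose proof (sqrt_pos (dot4 a a)); lra].
  rewrite Rsqr_mult, Rsqr_sqrt by apply dot4_self_nonneg. unfold dot4, Rsqr in *.
  set (x0 := Rabs (a 0%nat)) in *; set (x1 := Rabs (a 1%nat)) in *;
  set (x2 := Rabs (a 2%nat)) in *; set (x3 := Rabs (a 3%nat)) in *.
  pose proof (Rle_0_sqr (x0 - x1)); pose proof (Rle_0_sqr (x0 - x2)); pose proof (Rle_0_sqr (x0 - x3));
  pose proof (Rle_0_sqr (x1 - x2)); pose proof (Rle_0_sqr (x1 - x3)); pose proof (Rle_0_sqr (x2 - x3)).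
  unfold Rsqr in *. lra.
Qed.

Lemma Rabs_dot4_le (a w : vec4) (W : R) :
  (forall i, (i < 4)%nat -> Rabs (w i) <= W) -> Rabs (dot4 a w) <= 2 * norm14 a * W.
Proof.
  intros Hw.
  pose proof (Hw 0%nat ltac:(lia)); pose proof (Hw 1%nat ltac:(lia));
  pose proof (Hw 2%nat ltac:(lia)); pose proof (Hw 3%nat ltac:(lia)).
  pose proof (sum_abs4_le a).
  pose proof (Rabs_pos (a 0%nat)); pose proof (Rabs_pos (a 1%nat));
  pose proof (Rabs_pos (a 2%nat)); pose proof (Rabs_pos (a 3%nat)).
  assert (HW : 0 <= W) by (pose proof (Rabs_pos (w 0%nat)); lra).
  unfold dot4. eapply Rle_trans; [apply Rabs_triang|].
  eapply Rle_trans; [apply Rplus_le_compat_r, Rabs_triang|].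
  eapply Rle_trans; [apply Rplus_le_compat_r, Rplus_le_compat_r, Rabs_triang|].
  rewrite !Rabs_mult. nra.
Qed.

Lemma norm14_row0_le_norm24 (h : nat -> vec4) : norm14 (h 0%nat) <= norm24 h.
Proof. apply sqrt_le_1_alt. pose proof (dot4_self_nonneg (h 1%nat)). lra. Qed.

Lemma norm14_row1_le_norm24 (h : nat -> vec4) : norm14 (h 1%nat) <= norm24 h.
Proof. apply sqrt_le_1_alt. pose proof (dot4_self_nonneg (h 0%nat)). lra. Qed.

Lemma is_lim_seq_geom_scal (A q : R) : 0 <= q < 1 -> is_lim_seq (fun j => A * q ^ j) 0.
Proof.
  intros Hq. replace (Finite 0) with (Rbar_mult A 0) by (simpl; f_equal; ring).
  apply is_lim_seq_scal_l, is_lim_seq_geom. rewrite Rabs_right; lra.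
Qed.

Lemma le_of_le_plus_geom (x y A q : R) : 0 <= q < 1 -> (forall j, x <= y + A * q ^ j) -> x <= y.
Proof.
  intros Hq H.
  assert (Hlim : is_lim_seq (fun j => y + A * q ^ j) y).
  { pose proof (is_lim_seq_plus' _ _ y 0 (is_lim_seq_const y) (is_lim_seq_geom_scal A q Hq)) as L.
    rewrite Rplus_0_r in L. exact L. }
  exact (is_lim_seq_le (fun _ => x) _ x y H (is_lim_seq_const x) Hlim).
Qed.

Lemma eq0_of_abs_le_geom (x A q : R) : 0 <= q < 1 -> (forall j, Rabs x <= A * q ^ j) -> x = 0.
Proof.
  intros Hq H. apply Rabs_eq_0, Rle_antisym; [|apply Rabs_pos].
  apply (le_of_le_plus_geom _ _ A q Hq). intro j. rewrite Rplus_0_l. apply H.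
Qed.

Lemma is_lim_seq_geom_dominated (x : nat -> R) (A s : R) :
  0 <= s < 1 -> (forall m, Rabs (x m) <= A * s ^ m) -> is_lim_seq x 0.
Proof.
  intros Hs H. apply (is_lim_seq_le_le (fun m => - (A * s ^ m)) _ (fun m => A * s ^ m)).
  - intro m. apply Rabs_le_between, H.
  - replace (Finite 0) with (Rbar_opp 0) by (simpl; f_equal; ring).
    apply -> is_lim_seq_opp. apply is_lim_seq_geom_scal; exact Hs.
  - apply is_lim_seq_geom_scal; exact Hs.
Qed.

Lemma series_geom_dominated (a : nat -> R) (A r : R) :
  0 <= r < 1 -> (forall k, Rabs (a k) <= A * r ^ k) ->
  ex_series a /\ Rabs (Series a) <= A / (1 - r).
Proof.
  intros Hr Ha.
  assert (Hg : is_series (fun k => A * r ^ k) (A / (1 - r))).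
  { apply (is_series_scal_l A (fun k => r ^ k)), is_series_geom. rewrite Rabs_right; lra. }
  assert (Habs : ex_series (fun k => Rabs (a k))).
  { apply (@ex_series_le R_AbsRing R_CompleteNormedModule _ (fun k => A * r ^ k)).
    - intro k. change (norm (Rabs (a k))) with (Rabs (Rabs (a k))). rewrite Rabs_Rabsolu. apply Ha.
    - eexists; exact Hg. }
  split; [apply ex_series_Rabs, Habs|].
  eapply Rle_trans; [apply Series_Rabs, Habs|].
  rewrite <- (is_series_unique _ _ Hg).
  apply Series_le; [|eexists; exact Hg]. intro k. split; [apply Rabs_pos | apply Ha].
Qed.

Lemma is_lim_seq_bounded (u : nat -> R) (l : R) :
  is_lim_seq u l -> exists M, forall m, Rabs (u m) <= M.
Proof.
  intros Hu. destruct (filterlim_bounded u (ex_intro _ l Hu)) as [M HM]. exists M. exact HM.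
Qed.

Lemma pow_le_1 (x : R) (n : nat) : 0 <= x <= 1 -> x ^ n <= 1.
Proof. intros Hx. induction n; simpl; [lra|]. pose proof (pow_le x n ltac:(lra)). nra. Qed.

Lemma forward_recursion_bound (u : nat -> R) (mu c : R) :
  0 <= mu < 1 -> 0 <= c -> u 0%nat = 0 ->
  (forall m, Rabs (u (S m)) <= mu * Rabs (u m) + c) -> forall m, Rabs (u m) <= c / (1 - mu).
Proof.
  intros Hmu Hc H0 H m. induction m.
  - rewrite H0, Rabs_R0. apply Rdiv_le_0_compat; lra.
  - eapply Rle_trans; [apply H|].
    apply (Rmult_le_compat_l mu) in IHm; [|lra].
    replace (c / (1 - mu)) with (mu * (c / (1 - mu)) + c) by (field; lra). lra.
Qed.

Lemma backward_recursion_bound (u : nat -> R) (q c M : R) :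
  0 <= q < 1 -> 0 <= c -> (forall m, Rabs (u m) <= M) ->
  (forall m, Rabs (u m) <= q * Rabs (u (S m)) + c) -> forall m, Rabs (u m) <= c / (1 - q).
Proof.
  intros Hq Hc HM H m. apply (le_of_le_plus_geom _ _ M q Hq). intro j. revert m.
  induction j as [|j IH]; intro m.
  - pose proof (Rdiv_le_0_compat c (1 - q) Hc ltac:(lra)). specialize (HM m). simpl. lra.
  - eapply Rle_trans; [apply H|].
    specialize (IH (S m)). apply (Rmult_le_compat_l q) in IH; [|lra].
    replace (c / (1 - q) + M * q ^ S j) with (q * (c / (1 - q) + M * q ^ j) + c)
      by (simpl; field; lra). lra.
Qed.

Lemma tail_recursion_bound (u : nat -> R) (nu c : R) :
  0 <= nu < 1 -> 0 <= c -> is_lim_seq u 0 ->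
  (forall m, Rabs (u m) <= Rabs (u (S m)) + c * nu ^ m) ->
  forall m, Rabs (u m) <= c * nu ^ m / (1 - nu).
Proof.
  intros Hnu Hc Hu H m.
  assert (Hj : forall j m, Rabs (u m) <= Rabs (u (j + m)%nat) + c * nu ^ m / (1 - nu)).
  { intro j. induction j as [|j IH]; intro m'.
    - pose proof (pow_le nu m' ltac:(lra)).
      assert (0 <= c * nu ^ m' / (1 - nu)) by (apply Rdiv_le_0_compat; nra). simpl. lra.
    - eapply Rle_trans; [apply H|].
      specialize (IH (S m')). replace (j + S m')%nat with (S j + m')%nat in IH by lia.
      replace (c * nu ^ m' / (1 - nu)) with (c * nu ^ S m' / (1 - nu) + c * nu ^ m')
        by (simpl; field; lra). lra. }
  assert (Hlim : is_lim_seq (fun j => Rabs (u (j + m)%nat) + c * nu ^ m / (1 - nu))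
                   (c * nu ^ m / (1 - nu))).
  { pose proof (is_lim_seq_abs _ _ (proj1 (is_lim_seq_incr_n u m 0) Hu)) as L.
    simpl in L. rewrite Rabs_R0 in L.
    pose proof (is_lim_seq_plus' _ _ _ _ L (is_lim_seq_const (c * nu ^ m / (1 - nu)))) as L'.
    rewrite Rplus_0_l in L'. exact L'. }
  exact (is_lim_seq_le (fun _ => Rabs (u m)) _ _ _ (fun j => Hj j m) (is_lim_seq_const _) Hlim).
Qed.

Lemma is_lim_seq_forced_contraction (x : nat -> R) (mu nu c : R) :
  0 <= mu < 1 -> 0 <= nu < 1 -> 0 <= c ->
  (forall m, Rabs (x (S m)) <= mu * Rabs (x m) + c * nu ^ m) -> is_lim_seq x 0.
Proof.
  intros Hmu Hnu Hc H.
  pose proof (Rmax_l mu nu); pose proof (Rmax_r mu nu).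
  assert (Rmax mu nu < 1) by (apply Rmax_lub_lt; lra).
  (* any rate s strictly between max(mu, nu) and 1 works *)
  set (s := (1 + Rmax mu nu) / 2).
  set (A := Rmax (Rabs (x 0%nat)) (c / (s - mu))).
  assert (HA1 : Rabs (x 0%nat) <= A) by apply Rmax_l.
  assert (Hsmu : 0 < s - mu) by (unfold s; lra).
  assert (HA : c <= A * (s - mu)).
  { assert (HA2 : c / (s - mu) <= A) by apply Rmax_r.
    apply (Rmult_le_compat_r (s - mu)) in HA2; [|lra].
    assert (E : c / (s - mu) * (s - mu) = c) by (field; exact (Rgt_not_eq _ _ Hsmu)). lra. }
  apply (is_lim_seq_geom_dominated x A s); [unfold s; lra|].
  induction m as [|m IH]; [simpl; lra|].
  eapply Rle_trans; [apply H|].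
  assert (nu ^ m <= s ^ m) by (apply pow_incr; unfold s; lra).
  pose proof (pow_le nu m ltac:(lra)).
  assert (0 <= A) by (pose proof (Rabs_pos (x 0%nat)); lra).
  assert (mu * Rabs (x m) <= mu * (A * s ^ m)) by (apply Rmult_le_compat_l; lra).
  assert (c * nu ^ m <= A * (s - mu) * s ^ m) by (apply Rmult_le_compat; lra).
  simpl. nra.
Qed.

Lemma is_lim_seq_const_plus_dominated (c : R) (x : nat -> R) (A s : R) :
  0 <= s < 1 -> (forall m, Rabs (x m) <= A * s ^ m) -> is_lim_seq (fun m => c + x m) c.
Proof.
  intros Hs Hx. pose proof (is_lim_seq_plus' _ _ c 0 (is_lim_seq_const c)
                              (is_lim_seq_geom_dominated x A s Hs Hx)) as L.
  rewrite Rplus_0_r in L. exact L.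
Qed.

Definition bounded_by (u : nat -> vec4) (W : R) : Prop :=
  forall m i, (i < 4)%nat -> Rabs (u m i) <= W.

Definition seq_sub (u v : nat -> vec4) : nat -> vec4 := fun m i => u m i - v m i.

Lemma bounded_by_nonneg (u : nat -> vec4) (W : R) : bounded_by u W -> 0 <= W.
Proof.
  intros Hu. specialize (Hu 0%nat 0%nat ltac:(lia)). pose proof (Rabs_pos (u 0%nat 0%nat)). lra.
Qed.

Lemma dot4_seq_sub (a : vec4) (u v : nat -> vec4) (m : nat) :
  dot4 a (seq_sub u v m) = dot4 a (u m) - dot4 a (v m).
Proof. unfold dot4, seq_sub. ring. Qed.

Section LyapunovPerron.
Variables (mu nu gam : R) (f g h0 h1 : nat -> vec4).
Hypotheses (Hmu : 0 < mu < 1) (Hnu : 0 < nu < 1) (Hgam : 0 <= gam).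

Definition row_decay (a : nat -> vec4) : Prop :=
  forall j w W, (forall i, (i < 4)%nat -> Rabs (w i) <= W) ->
  Rabs (dot4 (a j) w) <= gam * nu ^ j * W.

Definition contraction_rate : R := gam * (/ (1 - mu) + / (1 - nu)).

Definition solves (u : nat -> vec4) : Prop :=
  forall m,
    u (S m) 0%nat = mu * u m 0%nat + dot4 (f m) (u m) /\
    u (S m) 1%nat = / mu * u m 1%nat + dot4 (g m) (u m) /\
    u (S m) 2%nat = u m 2%nat + dot4 (h0 m) (u m) /\
    u (S m) 3%nat = u m 3%nat + dot4 (h1 m) (u m).

Definition decaying_solution (xi0 c1 c2 : R) (u : nat -> vec4) : Prop :=
  solves u /\ u 0%nat 0%nat = xi0 /\
  is_lim_seq (fun m => u m 2%nat) c1 /\ is_lim_seq (fun m => u m 3%nat) c2 /\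
  is_lim_seq (fun m => u m 0%nat) 0 /\ is_lim_seq (fun m => u m 1%nat) 0.

Hypothesis Hrate : contraction_rate < 1.
Hypotheses (Hf : row_decay f) (Hg : row_decay g) (Hh0 : row_decay h0) (Hh1 : row_decay h1).

Lemma contraction_rate_nonneg : 0 <= contraction_rate.
Proof.
  unfold contraction_rate. pose proof (Rinv_0_lt_compat (1 - mu) ltac:(lra)).
  pose proof (Rinv_0_lt_compat (1 - nu) ltac:(lra)). apply Rmult_le_pos; lra.
Qed.

Lemma contraction_rate_ge (W : R) : 0 <= W ->
  gam * W / (1 - mu) <= contraction_rate * W /\ gam * W / (1 - nu) <= contraction_rate * W.
Proof.
  intros HW. unfold contraction_rate, Rdiv.
  pose proof (Rinv_0_lt_compat (1 - mu) ltac:(lra)).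
  pose proof (Rinv_0_lt_compat (1 - nu) ltac:(lra)).
  assert (0 <= gam * W) by (apply Rmult_le_pos; lra).
  split; nra.
Qed.

Lemma row_decay_le (a : nat -> vec4) (u : nat -> vec4) (W : R) (m : nat) :
  row_decay a -> bounded_by u W -> Rabs (dot4 (a m) (u m)) <= gam * W.
Proof.
  intros Ha Hu. pose proof (bounded_by_nonneg _ _ Hu).
  eapply Rle_trans; [apply Ha; intros i Hi; apply Hu, Hi|].
  pose proof (pow_le_1 nu m ltac:(lra)). pose proof (pow_le nu m ltac:(lra)).
  assert (0 <= gam * W) by (apply Rmult_le_pos; lra). nra.
Qed.

(** * Uniqueness *)

Lemma solves_seq_sub (u v : nat -> vec4) : solves u -> solves v -> solves (seq_sub u v).
Proof.
  intros Hu Hv m. destruct (Hu m) as [U0 [U1 [U2 U3]]]. destruct (Hv m) as [V0 [V1 [V2 V3]]].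
  unfold seq_sub; cbv beta. rewrite U0, U1, U2, U3, V0, V1, V2, V3.
  unfold dot4. repeat split; ring.
Qed.

Lemma solves_bounded_contract (w : nat -> vec4) (W : R) :
  solves w -> w 0%nat 0%nat = 0 ->
  (forall i, (i < 4)%nat -> is_lim_seq (fun m => w m i) 0) ->
  bounded_by w W -> bounded_by w (contraction_rate * W).
Proof.
  intros Hw H0 Hlim HW. pose proof (bounded_by_nonneg _ _ HW) as W0.
  destruct (contraction_rate_ge W W0) as [Q1 Q2].
  assert (GW : 0 <= gam * W) by (apply Rmult_le_pos; lra).
  assert (Drift : forall a i, row_decay a -> (i < 4)%nat ->
            (forall m, w (S m) i = w m i + dot4 (a m) (w m)) ->
            forall m, Rabs (w m i) <= contraction_rate * W).
  { intros a i Ha Hi Hrec m. eapply Rle_trans; [|apply Q2].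
    eapply Rle_trans; [apply (tail_recursion_bound (fun m => w m i) nu (gam * W)); try lra; [apply Hlim, Hi|]|].
    - intro k. replace (w k i) with (w (S k) i - dot4 (a k) (w k)) by (rewrite Hrec; ring).
      eapply Rle_trans; [apply Rabs_triang|]. rewrite Rabs_Ropp.
      replace (gam * W * nu ^ k) with (gam * nu ^ k * W) by ring.
      pose proof (Ha k (w k) W (HW k)). lra.
    - pose proof (pow_le_1 nu m ltac:(lra)). pose proof (pow_le nu m ltac:(lra)).
      apply Rmult_le_compat_r; [pose proof (Rinv_0_lt_compat (1 - nu) ltac:(lra)); lra | nra]. }
  intros m i Hi. destruct i as [|[|[|[|i]]]]; [| | | |lia].
  - eapply Rle_trans; [|apply Q1].
    apply (forward_recursion_bound (fun m => w m 0%nat)); try lra.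
    intro k. rewrite (proj1 (Hw k)). eapply Rle_trans; [apply Rabs_triang|].
    rewrite Rabs_mult, (Rabs_right mu) by lra.
    pose proof (row_decay_le f w W k Hf HW). lra.
  - eapply Rle_trans; [|apply Q1].
    apply (backward_recursion_bound (fun m => w m 1%nat) mu _ W); try lra; [intro k; apply HW; lia|].
    intro k. replace (w k 1%nat) with (mu * w (S k) 1%nat - mu * dot4 (g k) (w k))
      by (rewrite (proj1 (proj2 (Hw k))); field; lra).
    eapply Rle_trans; [apply Rabs_triang|]. rewrite Rabs_Ropp, !Rabs_mult, (Rabs_right mu) by lra.
    pose proof (row_decay_le g w W k Hg HW). pose proof (Rabs_pos (dot4 (g k) (w k))). nra.
  - apply (Drift h0); [exact Hh0 | lia | intro k; apply (Hw k)].
  - apply (Drift h1); [exact Hh1 | lia | intro k; apply (Hw k)].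
Qed.

Lemma solves_zero_data (w : nat -> vec4) :
  solves w -> w 0%nat 0%nat = 0 ->
  (forall i, (i < 4)%nat -> is_lim_seq (fun m => w m i) 0) ->
  forall m i, (i < 4)%nat -> w m i = 0.
Proof.
  intros Hw H0 Hlim.
  destruct (is_lim_seq_bounded _ _ (Hlim 0%nat ltac:(lia))) as [M0 HM0].
  destruct (is_lim_seq_bounded _ _ (Hlim 1%nat ltac:(lia))) as [M1 HM1].
  destruct (is_lim_seq_bounded _ _ (Hlim 2%nat ltac:(lia))) as [M2 HM2].
  destruct (is_lim_seq_bounded _ _ (Hlim 3%nat ltac:(lia))) as [M3 HM3].
  set (M := Rmax (Rmax M0 M1) (Rmax M2 M3)).
  assert (HM : bounded_by w M).
  { pose proof (Rmax_l M0 M1); pose proof (Rmax_r M0 M1); pose proof (Rmax_l M2 M3);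
    pose proof (Rmax_r M2 M3); pose proof (Rmax_l (Rmax M0 M1) (Rmax M2 M3));
    pose proof (Rmax_r (Rmax M0 M1) (Rmax M2 M3)).
    intros m i Hi. destruct i as [|[|[|[|i]]]]; [| | | |lia].
    - specialize (HM0 m). simpl in HM0. unfold M. lra.
    - specialize (HM1 m). simpl in HM1. unfold M. lra.
    - specialize (HM2 m). simpl in HM2. unfold M. lra.
    - specialize (HM3 m). simpl in HM3. unfold M. lra. }
  assert (Hj : forall j, bounded_by w (M * contraction_rate ^ j)).
  { induction j as [|j IH]; [simpl; rewrite Rmult_1_r; exact HM|].
    replace (M * contraction_rate ^ S j) with (contraction_rate * (M * contraction_rate ^ j))
      by (simpl; ring).
    apply solves_bounded_contract; assumption. }
  intros m i Hi. apply (eq0_of_abs_le_geom _ M contraction_rate).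
  - split; [apply contraction_rate_nonneg | exact Hrate].
  - intro j. apply Hj, Hi.
Qed.

Lemma decaying_solution_unique (xi0 c1 c2 : R) (u v : nat -> vec4) :
  decaying_solution xi0 c1 c2 u -> decaying_solution xi0 c1 c2 v ->
  forall m i, (i < 4)%nat -> u m i = v m i.
Proof.
  intros [Su [Iu [Lu2 [Lu3 [Lu0 Lu1]]]]] [Sv [Iv [Lv2 [Lv3 [Lv0 Lv1]]]]] m i Hi.
  assert (Hlim : forall i (l : R), is_lim_seq (fun m => u m i) l -> is_lim_seq (fun m => v m i) l ->
                   is_lim_seq (fun m => seq_sub u v m i) 0).
  { intros k l Hu Hv. rewrite <- (Rminus_diag l). exact (is_lim_seq_minus' _ _ _ _ Hu Hv). }
  apply Rminus_diag_uniq. apply (solves_zero_data (seq_sub u v)); [apply solves_seq_sub; assumption | | | exact Hi].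
  - unfold seq_sub. rewrite Iu, Iv. ring.
  - intros k Hk. destruct k as [|[|[|[|k]]]]; [| | | |lia]; eapply Hlim; eassumption.
Qed.

(** * Existence *)

Fixpoint forward_sum (u : nat -> vec4) (m : nat) : R :=
  match m with
  | O => 0
  | S m' => mu * forward_sum u m' + dot4 (f m') (u m')
  end.

Definition drift_term (a u : nat -> vec4) (m k : nat) : R := dot4 (a (m + k)%nat) (u (m + k)%nat).

Definition unstable_term (u : nat -> vec4) (m k : nat) : R := mu ^ S k * drift_term g u m k.

Definition perron (u : nat -> vec4) (m : nat) : vec4 := fun i =>
  match i with
  | O => forward_sum u m
  | 1%nat => - Series (unstable_term u m)
  | 2%nat => - Series (drift_term h0 u m)
  | 3%nat => - Series (drift_term h1 u m)
  | _ => 0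
  end.

Lemma drift_term_bound (a u : nat -> vec4) (W : R) (m k : nat) :
  row_decay a -> bounded_by u W -> Rabs (drift_term a u m k) <= gam * W * nu ^ m * nu ^ k.
Proof.
  intros Ha Hu. unfold drift_term.
  replace (gam * W * nu ^ m * nu ^ k) with (gam * nu ^ (m + k) * W) by (rewrite pow_add; ring).
  apply Ha. intros i Hi. apply Hu, Hi.
Qed.

Lemma series_drift_bound (a u : nat -> vec4) (W : R) (m : nat) :
  row_decay a -> bounded_by u W ->
  ex_series (drift_term a u m) /\
  Rabs (Series (drift_term a u m)) <= gam * W * nu ^ m / (1 - nu) /\
  Rabs (Series (drift_term a u m)) <= gam * W / (1 - nu).
Proof.
  intros Ha Hu. pose proof (bounded_by_nonneg _ _ Hu).
  assert (GW : 0 <= gam * W) by (apply Rmult_le_pos; lra).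
  destruct (series_geom_dominated (drift_term a u m) (gam * W * nu ^ m) nu ltac:(lra))
    as [Ex B]; [intro k; apply drift_term_bound; assumption|].
  repeat split; [exact Ex | exact B |].
  eapply Rle_trans; [exact B|]. apply Rmult_le_compat_r.
  - pose proof (Rinv_0_lt_compat (1 - nu) ltac:(lra)). lra.
  - pose proof (pow_le_1 nu m ltac:(lra)). pose proof (pow_le nu m ltac:(lra)). nra.
Qed.

Lemma series_unstable_bound (u : nat -> vec4) (W : R) (m : nat) :
  bounded_by u W ->
  ex_series (unstable_term u m) /\
  Rabs (Series (unstable_term u m)) <= gam * W * nu ^ m / (1 - nu) /\
  Rabs (Series (unstable_term u m)) <= gam * W / (1 - mu).
Proof.
  intros Hu. pose proof (bounded_by_nonneg _ _ Hu).
  assert (GW : 0 <= gam * W) by (apply Rmult_le_pos; lra).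
  assert (Hk : forall k, Rabs (unstable_term u m k) <= mu ^ k * Rabs (drift_term g u m k)).
  { intro k. unfold unstable_term. rewrite Rabs_mult, Rabs_right by (apply Rle_ge, pow_le; lra).
    apply Rmult_le_compat_r; [apply Rabs_pos|]. simpl. pose proof (pow_le mu k ltac:(lra)). nra. }
  assert (Hd : forall k, Rabs (drift_term g u m k) <= gam * W * nu ^ m * nu ^ k)
    by (intro k; apply drift_term_bound; assumption).
  destruct (series_geom_dominated (unstable_term u m) (gam * W * nu ^ m) nu ltac:(lra))
    as [Ex B1].
  { intro k. eapply Rle_trans; [apply Hk|]. pose proof (pow_le_1 mu k ltac:(lra)).
    pose proof (Rabs_pos (drift_term g u m k)). specialize (Hd k). nra. }
  destruct (series_geom_dominated (unstable_term u m) (gam * W) mu ltac:(lra)) as [_ B2].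
  { intro k. eapply Rle_trans; [apply Hk|]. rewrite (Rmult_comm (gam * W)).
    apply Rmult_le_compat_l; [apply pow_le; lra|]. eapply Rle_trans; [apply Hd|].
    pose proof (pow_le_1 nu m ltac:(lra)); pose proof (pow_le_1 nu k ltac:(lra)).
    pose proof (pow_le nu m ltac:(lra)); pose proof (pow_le nu k ltac:(lra)).
    assert (nu ^ m * nu ^ k <= 1) by nra. nra. }
  repeat split; assumption.
Qed.

Lemma perron_bounded (u : nat -> vec4) (W : R) :
  bounded_by u W -> bounded_by (perron u) (contraction_rate * W).
Proof.
  intros Hu. pose proof (bounded_by_nonneg _ _ Hu) as W0.
  destruct (contraction_rate_ge W W0) as [Q1 Q2].
  intros m i Hi. destruct i as [|[|[|[|i]]]]; [| | | |lia]; unfold perron; try rewrite Rabs_Ropp.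
  - eapply Rle_trans; [|apply Q1].
    apply (forward_recursion_bound (forward_sum u)); try lra; [apply Rmult_le_pos; lra | reflexivity |].
    intro k. simpl. eapply Rle_trans; [apply Rabs_triang|].
    rewrite Rabs_mult, (Rabs_right mu) by lra. pose proof (row_decay_le f u W k Hf Hu). lra.
  - destruct (series_unstable_bound u W m Hu) as [_ [_ B]]. lra.
  - destruct (series_drift_bound h0 u W m Hh0 Hu) as [_ [_ B]]. lra.
  - destruct (series_drift_bound h1 u W m Hh1 Hu) as [_ [_ B]]. lra.
Qed.

Lemma forward_sum_seq_sub (u v : nat -> vec4) (m : nat) :
  forward_sum (seq_sub u v) m = forward_sum u m - forward_sum v m.
Proof. induction m as [|m IH]; simpl; [ring|]. rewrite IH, dot4_seq_sub. ring. Qed.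

Lemma perron_seq_sub (u v : nat -> vec4) (Wu Wv : R) :
  bounded_by u Wu -> bounded_by v Wv ->
  forall m i, perron (seq_sub u v) m i = perron u m i - perron v m i.
Proof.
  intros Hu Hv m i.
  assert (Drift : forall a, row_decay a ->
            Series (drift_term a (seq_sub u v) m) = Series (drift_term a u m) - Series (drift_term a v m)).
  { intros a Ha.
    destruct (series_drift_bound a u Wu m Ha Hu) as [Eu _].
    destruct (series_drift_bound a v Wv m Ha Hv) as [Ev _].
    rewrite <- (Series_minus _ _ Eu Ev). apply Series_ext. intro k. apply dot4_seq_sub. }
  destruct i as [|[|[|[|i]]]]; unfold perron; cbv beta iota.
  - apply forward_sum_seq_sub.
  - destruct (series_unstable_bound u Wu m Hu) as [Eu _].
    destruct (series_unstable_bound v Wv m Hv) as [Ev _].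
    replace (- Series (unstable_term u m) - - Series (unstable_term v m))
      with (- (Series (unstable_term u m) - Series (unstable_term v m))) by ring.
    rewrite <- (Series_minus _ _ Eu Ev). f_equal. apply Series_ext. intro k. unfold unstable_term, drift_term. rewrite dot4_seq_sub. ring.
  - rewrite (Drift h0 Hh0). ring.
  - rewrite (Drift h1 Hh1). ring.
  - ring.
Qed.

Lemma series_drift_step (a u : nat -> vec4) (W : R) (m : nat) :
  row_decay a -> bounded_by u W ->
  Series (drift_term a u m) = dot4 (a m) (u m) + Series (drift_term a u (S m)).
Proof.
  intros Ha Hu. destruct (series_drift_bound a u W m Ha Hu) as [Ex _].
  rewrite (Series_incr_1 _ Ex). unfold drift_term at 1. rewrite Nat.add_0_r. f_equal.
  apply Series_ext. intro k. unfold drift_term. now rewrite <- plus_n_Sm.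
Qed.

Lemma series_unstable_step (u : nat -> vec4) (W : R) (m : nat) :
  bounded_by u W ->
  Series (unstable_term u m) = mu * dot4 (g m) (u m) + mu * Series (unstable_term u (S m)).
Proof.
  intros Hu. destruct (series_unstable_bound u W m Hu) as [Ex _].
  rewrite (Series_incr_1 _ Ex), <- Series_scal_l.
  unfold unstable_term at 1, drift_term at 1. rewrite Nat.add_0_r, pow_1. f_equal.
  apply Series_ext. intro k. unfold unstable_term, drift_term. rewrite <- plus_n_Sm. simpl. ring.
Qed.

Definition free_solution (xi0 c1 c2 : R) (m : nat) : vec4 := fun i =>
  match i with
  | O => xi0 * mu ^ m
  | 2%nat => c1
  | 3%nat => c2
  | _ => 0
  end.

Fixpoint picard (xi0 c1 c2 : R) (J : nat) : nat -> vec4 :=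
  match J with
  | O => fun _ _ => 0
  | S J' => fun m i => free_solution xi0 c1 c2 m i + perron (picard xi0 c1 c2 J') m i
  end.

Definition perron_fixpoint (xi0 c1 c2 : R) : nat -> vec4 := fun m i =>
  Series (fun J => seq_sub (picard xi0 c1 c2 (S J)) (picard xi0 c1 c2 J) m i).

Section BoundaryData.
Variables xi0 c1 c2 : R.

Definition data_bound : R := Rmax (Rabs xi0) (Rmax (Rabs c1) (Rabs c2)).

Lemma free_solution_bounded : bounded_by (free_solution xi0 c1 c2) data_bound.
Proof.
  unfold data_bound. pose proof (Rmax_l (Rabs xi0) (Rmax (Rabs c1) (Rabs c2))).
  pose proof (Rmax_r (Rabs xi0) (Rmax (Rabs c1) (Rabs c2))).
  pose proof (Rmax_l (Rabs c1) (Rabs c2)). pose proof (Rmax_r (Rabs c1) (Rabs c2)).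
  intros m i Hi. destruct i as [|[|[|[|i]]]]; [| | | |lia]; simpl; try lra.
  - rewrite Rabs_mult, (Rabs_right (mu ^ m)) by (apply Rle_ge, pow_le; lra).
    pose proof (pow_le_1 mu m ltac:(lra)). pose proof (pow_le mu m ltac:(lra)).
    pose proof (Rabs_pos xi0). nra.
  - rewrite Rabs_R0. pose proof (Rabs_pos xi0). lra.
Qed.

Lemma data_bound_nonneg : 0 <= data_bound.
Proof. exact (bounded_by_nonneg _ _ free_solution_bounded). Qed.

Lemma picard_bounded (J : nat) :
  bounded_by (picard xi0 c1 c2 J) (data_bound / (1 - contraction_rate)).
Proof.
  pose proof data_bound_nonneg. pose proof contraction_rate_nonneg.
  induction J as [|J IH]; intros m i Hi; simpl.
  - rewrite Rabs_R0. apply Rdiv_le_0_compat; lra.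
  - eapply Rle_trans; [apply Rabs_triang|].
    pose proof (free_solution_bounded m i Hi). pose proof (perron_bounded _ _ IH m i Hi).
    replace (data_bound / (1 - contraction_rate))
      with (data_bound + contraction_rate * (data_bound / (1 - contraction_rate))) by (field; lra).
    lra.
Qed.

Lemma picard_increment_bounded (J : nat) :
  bounded_by (seq_sub (picard xi0 c1 c2 (S J)) (picard xi0 c1 c2 J))
    (data_bound * contraction_rate ^ J).
Proof.
  induction J as [|J IH].
  - rewrite Rmult_1_r. intros m i Hi.
    assert (P0 : bounded_by (picard xi0 c1 c2 0) 0)
      by (intros ? ? ?; simpl; rewrite Rabs_R0; lra).
    pose proof (perron_bounded _ _ P0 m i Hi). pose proof (free_solution_bounded m i Hi).
    rewrite Rmult_0_r in *. unfold seq_sub. change (picard xi0 c1 c2 0 m i) with 0.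
    change (picard xi0 c1 c2 1 m i)
      with (free_solution xi0 c1 c2 m i + perron (picard xi0 c1 c2 0) m i).
    rewrite Rminus_0_r. eapply Rle_trans; [apply Rabs_triang|]. lra.
  - intros m i Hi.
    replace (seq_sub (picard xi0 c1 c2 (S (S J))) (picard xi0 c1 c2 (S J)) m i)
      with (perron (seq_sub (picard xi0 c1 c2 (S J)) (picard xi0 c1 c2 J)) m i)
      by (rewrite (perron_seq_sub _ _ _ _ (picard_bounded (S J)) (picard_bounded J));
          unfold seq_sub; simpl; ring).
    replace (data_bound * contraction_rate ^ S J)
      with (contraction_rate * (data_bound * contraction_rate ^ J)) by (simpl; ring).
    exact (perron_bounded _ _ IH m i Hi).
Qed.

Lemma picard_telescope (m i J : nat) :
  sum_f_R0 (fun j => seq_sub (picard xi0 c1 c2 (S j)) (picard xi0 c1 c2 j) m i) J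
  = picard xi0 c1 c2 (S J) m i.
Proof.
  induction J as [|J IH]; [unfold seq_sub; simpl; ring|].
  rewrite tech5, IH. unfold seq_sub. ring.
Qed.

Lemma perron_fixpoint_near_picard (J : nat) :
  bounded_by (seq_sub (perron_fixpoint xi0 c1 c2) (picard xi0 c1 c2 J))
    (data_bound * contraction_rate ^ J / (1 - contraction_rate)).
Proof.
  pose proof data_bound_nonneg. pose proof contraction_rate_nonneg.
  intros m i Hi. unfold seq_sub at 1, perron_fixpoint.
  set (D := fun j => seq_sub (picard xi0 c1 c2 (S j)) (picard xi0 c1 c2 j) m i).
  assert (HD : forall j, Rabs (D j) <= data_bound * contraction_rate ^ j)
    by (intro j; apply picard_increment_bounded, Hi).
  destruct (series_geom_dominated D data_bound contraction_rate ltac:(lra) HD) as [Ex B].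
  destruct J as [|J].
  - simpl. rewrite Rminus_0_r, Rmult_1_r. exact B.
  - rewrite (Series_incr_n D (S J) ltac:(lia) Ex). simpl pred. unfold D at 1.
    rewrite picard_telescope.
    replace (picard xi0 c1 c2 (S J) m i + Series (fun k => D (S J + k)%nat) - picard xi0 c1 c2 (S J) m i)
      with (Series (fun k => D (S J + k)%nat)) by ring.
    apply (series_geom_dominated (fun k => D (S J + k)%nat) _ contraction_rate ltac:(lra)).
    intro k. rewrite Rmult_assoc, <- pow_add. apply HD.
Qed.

Lemma perron_fixpoint_bounded :
  bounded_by (perron_fixpoint xi0 c1 c2) (data_bound / (1 - contraction_rate)).
Proof.
  intros m i Hi. pose proof (perron_fixpoint_near_picard 0 m i Hi) as B.
  unfold seq_sub in B. simpl in B. rewrite Rminus_0_r, Rmult_1_r in B. exact B.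
Qed.

Lemma perron_fixpoint_eq (m i : nat) : (i < 4)%nat ->
  perron_fixpoint xi0 c1 c2 m i = free_solution xi0 c1 c2 m i + perron (perron_fixpoint xi0 c1 c2) m i.
Proof.
  intros Hi. pose proof data_bound_nonneg. pose proof contraction_rate_nonneg.
  set (z := perron_fixpoint xi0 c1 c2).
  apply Rminus_diag_uniq.
  apply (eq0_of_abs_le_geom _ (2 * data_bound / (1 - contraction_rate)) contraction_rate);
    [lra|].
  intro J. set (e := data_bound * contraction_rate ^ J / (1 - contraction_rate)).
  (* z - b - K z = (z - picard (S J)) + K (picard J - z), both of size O(rate^J) *)
  replace (z m i - (free_solution xi0 c1 c2 m i + perron z m i))
    with (seq_sub z (picard xi0 c1 c2 (S J)) m i + perron (seq_sub (picard xi0 c1 c2 J) z) m i)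
    by (unfold z; rewrite (perron_seq_sub _ _ _ _ (picard_bounded J) perron_fixpoint_bounded);
        unfold seq_sub; simpl; ring).
  eapply Rle_trans; [apply Rabs_triang|].
  pose proof (perron_fixpoint_near_picard (S J) m i Hi) as C1.
  assert (C2 : bounded_by (seq_sub (picard xi0 c1 c2 J) z) e).
  { intros m' i' Hi'. unfold seq_sub. rewrite Rabs_minus_sym.
    apply perron_fixpoint_near_picard, Hi'. }
  pose proof (perron_bounded _ _ C2 m i Hi) as C3.
  assert (E1 : data_bound * contraction_rate ^ S J / (1 - contraction_rate) = contraction_rate * e)
    by (unfold e; simpl; field; lra).
  assert (He : 0 <= e) by (apply Rdiv_le_0_compat; [apply Rmult_le_pos; [|apply pow_le]|]; lra).
  replace (2 * data_bound / (1 - contraction_rate) * contraction_rate ^ J) with (2 * e)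
    by (unfold e; field; lra).
  rewrite E1 in C1. fold z in C1. nra.
Qed.

Lemma perron_fixpoint_solves : solves (perron_fixpoint xi0 c1 c2).
Proof.
  pose proof perron_fixpoint_bounded as Hz. intro m.
  rewrite !(perron_fixpoint_eq (S m)), !(perron_fixpoint_eq m) by lia.
  unfold free_solution, perron; cbv beta iota. repeat split.
  - simpl. ring.
  - rewrite (series_unstable_step _ _ m Hz). field. lra.
  - rewrite (series_drift_step h0 _ _ m Hh0 Hz). ring.
  - rewrite (series_drift_step h1 _ _ m Hh1 Hz). ring.
Qed.

Theorem decaying_solution_exists : decaying_solution xi0 c1 c2 (perron_fixpoint xi0 c1 c2).
Proof.
  set (z := perron_fixpoint xi0 c1 c2). set (W := data_bound / (1 - contraction_rate)).
  assert (Hz : bounded_by z W) by apply perron_fixpoint_bounded.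
  pose proof (bounded_by_nonneg _ _ Hz) as W0.
  assert (Hsolves : solves z) by apply perron_fixpoint_solves.
  assert (Hneutral : forall a i c, row_decay a ->
            (forall m, z m i = c + - Series (drift_term a z m)) -> is_lim_seq (fun m => z m i) c).
  { intros a i c Ha Hrep. apply (is_lim_seq_ext (fun m => c + - Series (drift_term a z m))).
    - intro m. symmetry. apply Hrep.
    - apply (is_lim_seq_const_plus_dominated c _ (gam * W / (1 - nu)) nu); [lra|].
      intro m. rewrite Rabs_Ropp. destruct (series_drift_bound a z W m Ha Hz) as [_ [B _]].
      unfold Rdiv in *. lra. }
  split; [exact Hsolves|]. split; [|split; [|split; [|split]]].
  - rewrite perron_fixpoint_eq by lia. simpl. ring.
  - apply (Hneutral h0 2%nat c1 Hh0). intro m. rewrite perron_fixpoint_eq by lia. reflexivity.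
  - apply (Hneutral h1 3%nat c2 Hh1). intro m. rewrite perron_fixpoint_eq by lia. reflexivity.
  - apply (is_lim_seq_forced_contraction _ mu nu (gam * W)); try lra; [apply Rmult_le_pos; lra|].
    intro m. rewrite (proj1 (Hsolves m)). eapply Rle_trans; [apply Rabs_triang|].
    rewrite Rabs_mult, (Rabs_right mu) by lra.
    replace (gam * W * nu ^ m) with (gam * nu ^ m * W) by ring.
    pose proof (Hf m (z m) W (Hz m)). lra.
  - apply (is_lim_seq_ext (fun m => 0 + - Series (unstable_term z m))).
    + intro m. rewrite perron_fixpoint_eq by lia. reflexivity.
    + apply (is_lim_seq_const_plus_dominated 0 _ (gam * W / (1 - nu)) nu); [lra|].
      intro m. rewrite Rabs_Ropp. destruct (series_unstable_bound z W m Hz) as [_ [B _]].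
      unfold Rdiv in *. lra.
Qed.

End BoundaryData.
End LyapunovPerron.

(** * Back to integer time *)

Definition zshift {A : Type} (N : Z) (F : Z -> A) : nat -> A := fun j => F (N + Z.of_nat j)%Z.

Definition zunshift (N : Z) (u : nat -> vec4) : Z -> vec4 := fun n => u (Z.to_nat (n - N)).

Definition decaying_Zsolution (mu : R) (F G : Z -> vec4) (H : Z -> nat -> vec4) (N : Z)
  (xi0 c1 c2 : R) (zeta : Z -> vec4) : Prop :=
  is_solution mu F G H N zeta /\ zeta N 0%nat = xi0 /\
  Zcv (fun n => zeta n 2%nat) c1 /\ Zcv (fun n => zeta n 3%nat) c2 /\
  Zcv (fun n => zeta n 0%nat) 0 /\ Zcv (fun n => zeta n 1%nat) 0.

Lemma is_lim_seq_zshift (u : Z -> R) (N : Z) (l : R) :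
  Zcv u l -> is_lim_seq (zshift N u) l.
Proof.
  intros Hu. apply is_lim_seq_Reals. intros eps Heps. destruct (Hu eps Heps) as [M HM].
  exists (Z.to_nat (M - N)). intros m Hm. apply HM. lia.
Qed.

Lemma Zcv_zunshift (u : nat -> vec4) (N : Z) (i : nat) (l : R) :
  is_lim_seq (fun m => u m i) l -> Zcv (fun n => zunshift N u n i) l.
Proof.
  intros Hu eps Heps. destruct (proj1 (is_lim_seq_Reals _ _) Hu eps Heps) as [M HM].
  exists (N + Z.of_nat M)%Z. intros n Hn. apply HM. lia.
Qed.

Section Transfer.
Variables (mu : R) (F G : Z -> vec4) (H : Z -> nat -> vec4) (N : Z).

Let f := zshift N F.
Let g := zshift N G.
Let h0 := fun j => zshift N H j 0%nat.
Let h1 := fun j => zshift N H j 1%nat.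

Lemma decaying_Zsolution_zshift (xi0 c1 c2 : R) (zeta : Z -> vec4) :
  decaying_Zsolution mu F G H N xi0 c1 c2 zeta ->
  decaying_solution mu f g h0 h1 xi0 c1 c2 (zshift N zeta).
Proof.
  intros [Hs [H0 [L2 [L3 [L0 L1]]]]].
  split; [|split; [|repeat split; apply (is_lim_seq_zshift (fun n => zeta n _)); assumption]].
  - intro m. unfold zshift. rewrite Nat2Z.inj_succ, <- Z.add_1_r, Z.add_assoc.
    apply Hs. lia.
  - unfold zshift. rewrite Z.add_0_r. exact H0.
Qed.

Lemma decaying_solution_zunshift (xi0 c1 c2 : R) (u : nat -> vec4) :
  decaying_solution mu f g h0 h1 xi0 c1 c2 u ->
  decaying_Zsolution mu F G H N xi0 c1 c2 (zunshift N u).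
Proof.
  intros [Hs [H0 [L2 [L3 [L0 L1]]]]].
  split; [|split; [|repeat split; apply Zcv_zunshift; assumption]].
  - intros n Hn. unfold zunshift.
    replace (Z.to_nat (n + 1 - N)) with (S (Z.to_nat (n - N))) by lia.
    destruct (Hs (Z.to_nat (n - N))) as [E0 [E1 [E2 E3]]].
    unfold f, g, h0, h1, zshift in *.
    replace (N + Z.of_nat (Z.to_nat (n - N)))%Z with n in * by lia. auto.
  - unfold zunshift. rewrite Z.sub_diag. exact H0.
Qed.

End Transfer.

Lemma exists_contracting_start (mu nu C : R) (N0 : Z) :
  0 < mu < 1 -> 0 < nu < 1 -> C > 0 ->
  exists n0 : nat, (N0 <= Z.of_nat n0)%Z /\ contraction_rate mu nu (2 * C * nu ^ n0) < 1.
Proof.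
  intros Hmu Hnu HC.
  set (D := / (1 - mu) + / (1 - nu)).
  assert (HD : 0 < D) by (unfold D; pose proof (Rinv_0_lt_compat (1 - mu) ltac:(lra));
    pose proof (Rinv_0_lt_compat (1 - nu) ltac:(lra)); lra).
  destruct (pow_lt_1_zero nu ltac:(rewrite Rabs_right; lra) (/ (2 * C * D)))
    as [K HK]; [apply Rinv_0_lt_compat; nra|].
  exists (Nat.max K (Z.to_nat N0)). split; [lia|].
  specialize (HK (Nat.max K (Z.to_nat N0)) ltac:(lia)).
  rewrite Rabs_right in HK by (apply Rle_ge, pow_le; lra).
  apply (Rmult_lt_compat_l (2 * C * D)) in HK; [|nra].
  rewrite Rinv_r in HK by nra. unfold contraction_rate. fold D. nra.
Qed.

Lemma row_decay_of_norm14 (nu C : R) (n0 : nat) (A : Z -> vec4) :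
  (forall j, norm14 (A (Z.of_nat n0 + Z.of_nat j)%Z) <= C * powerRZ nu (Z.of_nat n0 + Z.of_nat j)) ->
  row_decay nu (2 * C * nu ^ n0) (zshift (Z.of_nat n0) A).
Proof.
  intros Ha j w W Hw.
  eapply Rle_trans; [apply Rabs_dot4_le, Hw|].
  assert (W0 : 0 <= W) by (pose proof (Hw 0%nat ltac:(lia)); pose proof (Rabs_pos (w 0%nat)); lra).
  specialize (Ha j).
  replace (powerRZ nu (Z.of_nat n0 + Z.of_nat j)) with (nu ^ n0 * nu ^ j) in Ha
    by (rewrite <- Nat2Z.inj_add, <- pow_powerRZ, pow_add; reflexivity).
  replace (2 * C * nu ^ n0 * nu ^ j * W) with (2 * (C * (nu ^ n0 * nu ^ j)) * W) by ring.
  apply Rmult_le_compat_r; [exact W0|]. unfold zshift. lra.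
Qed.

Theorem lemma3 (mu nu C : R) (N0 : Z) (F G : Z -> vec4) (H : Z -> nat -> vec4) :
  0 < mu < 1 -> 0 < nu < 1 -> C > 0 ->
  (forall n : Z, (N0 <= n)%Z ->
     norm14 (F n) <= C * powerRZ nu n /\
     norm14 (G n) <= C * powerRZ nu n /\
     norm24 (H n) <= C * powerRZ nu n) ->
  exists N : Z, (N0 <= N)%Z /\
    forall (xi0 chip1 chip2 : R),
      (exists zeta : Z -> vec4,
         is_solution mu F G H N zeta /\ zeta N 0%nat = xi0 /\
         Zcv (fun n => zeta n 2%nat) chip1 /\ Zcv (fun n => zeta n 3%nat) chip2 /\
         Zcv (fun n => zeta n 0%nat) 0 /\ Zcv (fun n => zeta n 1%nat) 0) /\
      (forall zeta zeta' : Z -> vec4,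
         is_solution mu F G H N zeta /\ zeta N 0%nat = xi0 /\
         Zcv (fun n => zeta n 2%nat) chip1 /\ Zcv (fun n => zeta n 3%nat) chip2 /\
         Zcv (fun n => zeta n 0%nat) 0 /\ Zcv (fun n => zeta n 1%nat) 0 ->
         is_solution mu F G H N zeta' /\ zeta' N 0%nat = xi0 /\
         Zcv (fun n => zeta' n 2%nat) chip1 /\ Zcv (fun n => zeta' n 3%nat) chip2 /\
         Zcv (fun n => zeta' n 0%nat) 0 /\ Zcv (fun n => zeta' n 1%nat) 0 ->
         forall n : Z, (N <= n)%Z -> forall i : nat, (i < 4)%nat ->
           zeta n i = zeta' n i).
Proof.
  intros Hmu Hnu HC Hnorm.
  destruct (exists_contracting_start mu nu C N0 Hmu Hnu HC) as [n0 [HN0 Hrate]].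
  exists (Z.of_nat n0). split; [exact HN0|].
  assert (Hgam : 0 <= 2 * C * nu ^ n0) by (pose proof (pow_le nu n0 ltac:(lra)); nra).
  assert (Hnorm' := fun j => Hnorm (Z.of_nat n0 + Z.of_nat j)%Z ltac:(lia)).
  assert (Hf := row_decay_of_norm14 nu C n0 F (fun j => proj1 (Hnorm' j))).
  assert (Hg := row_decay_of_norm14 nu C n0 G (fun j => proj1 (proj2 (Hnorm' j)))).
  assert (Hh0 := row_decay_of_norm14 nu C n0 (fun n => H n 0%nat)
                   (fun j => Rle_trans _ _ _ (norm14_row0_le_norm24 _) (proj2 (proj2 (Hnorm' j))))).
  assert (Hh1 := row_decay_of_norm14 nu C n0 (fun n => H n 1%nat)
                   (fun j => Rle_trans _ _ _ (norm14_row1_le_norm24 _) (proj2 (proj2 (Hnorm' j))))).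
  intros xi0 c1 c2. split.
  - eexists. apply decaying_solution_zunshift.
    exact (decaying_solution_exists _ _ _ _ _ _ _ Hmu Hnu Hgam Hrate Hf Hg Hh0 Hh1 xi0 c1 c2).
  - intros zeta zeta' Hz Hz' n Hn i Hi.
    replace n with (Z.of_nat n0 + Z.of_nat (Z.to_nat (n - Z.of_nat n0)))%Z by lia.
    exact (decaying_solution_unique _ _ _ _ _ _ _ Hmu Hnu Hgam Hrate Hf Hg Hh0 Hh1 xi0 c1 c2 _ _
             (decaying_Zsolution_zshift _ _ _ _ _ _ _ _ _ Hz)
             (decaying_Zsolution_zshift _ _ _ _ _ _ _ _ _ Hz') _ _ Hi).
Qed.
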